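(* Let $\mathbb{V}$ be a vector space of dimension $n\geq 3$ over a finite field $\mathbb{F}$, with a fixed basis $\mathcal{B}=\{v_1,\dots,v_n\}$, and let $\mathbb{IG}(\mathbb{V})$ be its nonzero component graph with respect to $\mathcal{B}$. Then $\operatorname{sdim}_M(\mathbb{IG}(\mathbb{V}))=|V(\mathbb{IG}(\mathbb{V}))|-2^{n-1}$.
   Context: For $a=a_1v_1+\dots+a_nv_n\in\mathbb{V}$, its skeleton is $S_{\mathcal{B}}(a)=\{v_i: a_i\neq 0\}$. The nonzero component graph $\mathbb{IG}(\mathbb{V})$ has vertex set $\mathbb{V}\setminus\{0\}$, distinct $a,b$ adjacent iff $S_{\mathcal{B}}(a)\cap S_{\mathcal{B}}(b)\neq\emptyset$. For a connected graph $G$, a vertex $w$ strongly resolves $u,v$ if some shortest $u$–$w$ path contains $v$ or some shortest $v$–$w$ path contains $u$; $\operatorname{sdim}_M(G)$ is the minimum size of a set $W$ such that every pair of distinct vertices is strongly resolved by some vertex of $W$. *)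

From HB Require Import structures.
From mathcomp Require Import all_boot all_order all_algebra.
Set Implicit Arguments. Unset Strict Implicit. Unset Printing Implicit Defensive.
Import GRing.Theory.
Local Open Scope ring_scope.

(* The vector space V of dimension n over F with fixed basis B = {v_1..v_n}
   is represented in coordinates w.r.t. B, i.e. as row vectors 'rV[F]_n;
   v_i corresponds to the i-th coordinate. *)

Definition skeleton (F : fieldType) (n : nat) (a : 'rV[F]_n) : {set 'I_n} :=
  [set i | a 0 i != 0].

Notation nzvec F n := {a : 'rV[F]_n | a != 0}.

Definition IG_adj (F : fieldType) (n : nat) : rel (nzvec F n) :=
  fun a b => (a != b) && (skeleton (val a) :&: skeleton (val b) != set0).

Definition walk (T : eqType) (e : rel T) (u : T) (p : seq T) (w : T) : bool :=
  path e u p && (last u p == w).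

Definition shortest_walk (T : eqType) (e : rel T) (u : T) (p : seq T) (w : T) : Prop :=
  walk e u p w /\ forall q, walk e u q w -> (size p <= size q)%N.

Definition strongly_resolves (T : eqType) (e : rel T) (w u v : T) : Prop :=
  (exists p, shortest_walk e u p w /\ v \in u :: p) \/
  (exists p, shortest_walk e v p w /\ u \in v :: p).

Definition strong_resolving_set (T : finType) (e : rel T) (W : {set T}) : Prop :=
  forall u v : T, u != v -> exists2 w, w \in W & strongly_resolves e w u v.

Definition is_sdimM (T : finType) (e : rel T) (k : nat) : Prop :=
  (exists W : {set T}, strong_resolving_set e W /\ #|W| = k) /\
  (forall W : {set T}, strong_resolving_set e W -> (k <= #|W|)%N).

From HB Require Import structures.
From mathcomp Require Import all_boot all_order all_algebra.
From mathcomp Require Import zify.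
Set Implicit Arguments. Unset Strict Implicit. Unset Printing Implicit Defensive.
Import GRing.Theory.

(* Any two vertices of IG(V) are at distance at most 2, through the all-ones
   vector. Two distinct vertices whose skeletons are equal (twins) or disjoint
   (at distance 2) are mutually maximally distant, so only they themselves can
   strongly resolve their pair. Hence the vertices outside a strong resolving
   set have pairwise distinct and pairwise intersecting skeletons, and an
   intersecting family of subsets of an n-set has at most 2^(n-1) members.
   Conversely, the 2^(n-1) vectors with 0/1 coordinates and first coordinate 1
   can all be left out: if u, v are two of them and i lies in the skeleton of
   v but not of u, then u -- v -- e_i is a shortest path, so the unit vector
   e_i resolves u and v. *)

Section Walks.
Variables (T : eqType) (e : rel T).

Lemma walk_nil u w : walk e u [::] w = (u == w).
Proof. by []. Qed.

Lemma walk_cons u x p w : walk e u (x :: p) w = e u x && walk e x p w.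
Proof. by rewrite /walk /= andbA. Qed.

Lemma walk_cat u p q w :
  walk e u (p ++ q) w = walk e u p (last u p) && walk e (last u p) q w.
Proof. by rewrite /walk cat_path last_cat eqxx andbT andbA. Qed.

Lemma walk_last u p w : walk e u p w -> last u p = w.
Proof. by case/andP=> _ /eqP. Qed.

Lemma walk_mem_last u p w : walk e u p w -> w \in u :: p.
Proof. by move/walk_last <-; apply: mem_last. Qed.

Lemma walk_size_gt0 u p w : walk e u p w -> u != w -> (0 < size p)%N.
Proof. by case: p => //; rewrite walk_nil => /eqP ->; rewrite eqxx. Qed.

Lemma walk_size_gt1 u p w : walk e u p w -> u != w -> ~~ e u w -> (1 < size p)%N.
Proof.
case: p => [|x [|y p]] //; first by rewrite walk_nil => /eqP ->; rewrite eqxx.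
by rewrite walk_cons walk_nil => /andP[eux /eqP <-] _; rewrite eux.
Qed.

Lemma shortest_walk_nil u : shortest_walk e u [::] u.
Proof. by split=> [|q _]; rewrite ?walk_nil. Qed.

Lemma shortest_walk_edge u w : u != w -> e u w -> shortest_walk e u [:: w] w.
Proof.
move=> uw euw; split; first by rewrite walk_cons euw walk_nil eqxx.
by move=> q /walk_size_gt0; apply.
Qed.

Lemma shortest_walk_path2 u x w : u != w -> ~~ e u w -> e u x -> e x w ->
  shortest_walk e u [:: x; w] w.
Proof.
move=> uw nuw eux exw; split; first by rewrite !walk_cons eux exw walk_nil eqxx.
by move=> q /walk_size_gt1; apply.
Qed.

Definition maximally_distant (u v : T) : Prop :=
  forall x q, e v x -> walk e u q v ->
  exists2 q', walk e u q' x & (size q' <= size q)%N.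

Lemma maximally_distant_shortest_last u v p w :
  maximally_distant u v -> shortest_walk e u p w -> v \in p -> w = v.
Proof.
move=> mdv [uw minp] vp; case/splitPr: vp uw minp => p1 p2.
rewrite -cat_rcons walk_cat last_rcons => /andP[uv vw] minp.
case: p2 vw minp => [/eqP // | x r]; rewrite walk_cons => /andP[vx xw] minp.
have [q' uq'x le_q'] := mdv x _ vx uv.
have := minp (q' ++ r); rewrite walk_cat (walk_last uq'x) uq'x xw.
move/(_ isT); rewrite !size_cat size_rcons /= in le_q' *; lia.
Qed.

Lemma strongly_resolvesC w u v :
  strongly_resolves e w u v -> strongly_resolves e w v u.
Proof. by case; [right | left]. Qed.

Lemma strongly_resolves_last u p w :
  shortest_walk e u p w -> strongly_resolves e w u w.
Proof. by move=> sp; left; exists p; split; last exact: walk_mem_last sp.1. Qed.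

Lemma strongly_resolves_mutually_maximally_distant w u v : u != v ->
  maximally_distant u v -> maximally_distant v u ->
  strongly_resolves e w u v -> w = u \/ w = v.
Proof.
move=> uv muv mvu [[p [sp vp]] | [p [sp up]]].
- right; apply: maximally_distant_shortest_last muv sp _.
  by move: vp; rewrite inE eq_sym (negbTE uv).
- left; apply: maximally_distant_shortest_last mvu sp _.
  by move: up; rewrite inE (negbTE uv).
Qed.

End Walks.

Lemma strong_resolving_set_mutually_maximally_distant (T : finType) (e : rel T)
    (W : {set T}) u v :
  strong_resolving_set e W -> u != v ->
  maximally_distant e u v -> maximally_distant e v u -> (u \in W) || (v \in W).
Proof.
move=> resW uv muv mvu; have [w wW] := resW u v uv.
by case/(strongly_resolves_mutually_maximally_distant uv muv mvu) => <-;
  rewrite wW ?orbT.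
Qed.

Lemma card_setT_set (T : finType) : #|[set: {set T}]| = 2 ^ #|T|.
Proof. by rewrite -powersetT card_powerset cardsT. Qed.

Lemma intersecting_family_card (T : finType) (A : {set {set T}}) :
  {in A &, forall S S', S :&: S' != set0} -> (#|A| * 2 <= 2 ^ #|T|)%N.
Proof.
move=> intA; pose B := [set ~: S | S in A].
have cardB : #|B| = #|A| by apply: card_imset; apply: setC_inj.
have AB0 : A :&: B = set0.
  apply/setP => S; rewrite !inE; apply/negP => /andP[SA /imsetP[S' S'A defS]].
  by move: (intA _ _ SA S'A); rewrite defS setIC setICr eqxx.
have := cardsU A B; rewrite AB0 cards0 subn0 cardB.
have := subset_leq_card (subsetT (A :|: B)); rewrite card_setT_set; lia.
Qed.

Lemma card_sets_containing (T : finType) (x : T) :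
  (#|[set S : {set T} | x \in S]| * 2 = 2 ^ #|T|)%N.
Proof.
set A := [set S : {set T} | x \in S].
have defAC : [set ~: S | S in A] = ~: A.
  apply/setP => S; rewrite !inE; apply/imsetP/idP => [[S' + ->] | xS].
    by rewrite !inE negbK.
  by exists (~: S); rewrite ?setCK // !inE.
have cardAC : #|~: A| = #|A| by rewrite -defAC; apply: card_imset; apply: setC_inj.
by have := cardsC A; rewrite cardAC -cardsT card_setT_set; lia.
Qed.

Section NonzeroComponentGraph.
Variables (F : fieldType) (n : nat).
Local Notation V := (nzvec F n).
Local Notation e := (@IG_adj F n).
Local Notation sk a := (skeleton (val a)).

Lemma skeleton_eq0 (a : 'rV[F]_n) : (skeleton a == set0) = (a == 0%R).
Proof.
apply/eqP/eqP => [a0 | ->]; last by apply/setP => j; rewrite !inE mxE eqxx.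
apply/rowP => i; rewrite mxE; apply/eqP.
have : i \notin skeleton a by rewrite a0 inE.
by rewrite inE negbK.
Qed.

Lemma skeleton_neq0 (a : V) : sk a != set0.
Proof. by rewrite skeleton_eq0 (valP a). Qed.

Definition indicator (S : {set 'I_n}) : 'rV[F]_n :=
  \row_j (if j \in S then 1 else 0)%R.

Lemma skeleton_indicator S : skeleton (indicator S) = S.
Proof.
apply/setP => j; rewrite inE mxE.
by case: (j \in S); rewrite ?oner_neq0 ?eqxx.
Qed.

Lemma indicator_neq0 S : S != set0 -> indicator S != 0%R.
Proof. by rewrite -skeleton_eq0 skeleton_indicator. Qed.

Definition nz_indicator S (S_neq0 : S != set0) : V :=
  exist _ (indicator S) (indicator_neq0 S_neq0).

Lemma skeleton_nz_indicator S (S_neq0 : S != set0) :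
  sk (nz_indicator S_neq0) = S.
Proof. exact: skeleton_indicator. Qed.

Lemma IG_adjC : symmetric e.
Proof. by move=> a b; rewrite /IG_adj eq_sym setIC. Qed.

Lemma maximally_distant_twins (u v : V) :
  u != v -> sk u = sk v -> maximally_distant e u v.
Proof.
move=> uv skuv x q /andP[vx skvx] uqv.
case: (eqVneq u x) => [<- | ux]; first by exists [::]; rewrite ?walk_nil.
exists [:: x]; last exact: walk_size_gt0 uqv uv.
by rewrite walk_cons walk_nil /IG_adj ux skuv skvx eqxx.
Qed.

End NonzeroComponentGraph.

Section PositiveDimension.
Variables (F : fieldType) (m : nat).
Local Notation V := (nzvec F m.+1).
Local Notation e := (@IG_adj F m.+1).
Local Notation sk a := (skeleton (val a)).

Lemma setT_ordS_neq0 : [set: 'I_m.+1] != set0.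
Proof. by apply/set0Pn; exists ord0. Qed.

Definition ones : V := nz_indicator F setT_ordS_neq0.

Lemma IG_adj_ones (u : V) : u != ones -> e u ones.
Proof.
by move=> uo; rewrite /IG_adj uo skeleton_nz_indicator setIT skeleton_neq0.
Qed.

Lemma IG_shortest_walk_exists (u w : V) : exists p, shortest_walk e u p w.
Proof.
have [<- | uw] := eqVneq u w; first by exists [::]; apply: shortest_walk_nil.
have [euw | neuw] := boolP (e u w); first by exists [:: w]; apply: shortest_walk_edge.
have uo : u != ones.
  by apply: contraNneq neuw => uo; rewrite IG_adjC uo IG_adj_ones // -uo eq_sym.
have wo : w != ones by apply: contraNneq neuw => ->; apply: IG_adj_ones.
exists [:: ones; w]; apply: shortest_walk_path2 => //; first exact: IG_adj_ones.
by rewrite IG_adjC IG_adj_ones.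
Qed.

Lemma maximally_distant_disjoint (u v : V) :
  sk u :&: sk v = set0 -> maximally_distant e u v.
Proof.
move=> skuv0 x q vx uqv.
have uv : u != v.
  by apply: contraNneq (skeleton_neq0 v) => uv; rewrite -skuv0 uv setIid.
have nuv : ~~ e u v by rewrite /IG_adj skuv0 eqxx andbF.
have uo : u != ones.
  apply: contraNneq (skeleton_neq0 v) => uo.
  by rewrite -skuv0 uo skeleton_nz_indicator setTI.
have size_q := walk_size_gt1 uqv uv nuv.
have [-> | xo] := eqVneq x ones.
  by exists [:: ones]; [rewrite walk_cons IG_adj_ones ?walk_nil ?eqxx | apply: ltnW].
exists [:: ones; x] => //.
by rewrite !walk_cons IG_adj_ones // IG_adjC IG_adj_ones ?walk_nil ?eqxx.
Qed.

End PositiveDimension.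

Section FiniteField.
Variables (F : finFieldType) (m : nat).
Local Notation V := (nzvec F m.+1).
Local Notation e := (@IG_adj F m.+1).
Local Notation sk a := (skeleton (val a)).

Lemma skeletons_outside_strong_resolving_set (W : {set V}) (u v : V) :
  strong_resolving_set e W -> u \notin W -> v \notin W -> u != v ->
  sk u != sk v /\ sk u :&: sk v != set0.
Proof.
move=> resW uW vW uv; have vu : v != u by rewrite eq_sym.
have := strong_resolving_set_mutually_maximally_distant resW uv.
rewrite (negbTE uW) (negbTE vW) => md_uv.
split; apply/eqP => skuv.
- by have := md_uv (maximally_distant_twins uv skuv)
    (maximally_distant_twins vu (esym skuv)).
- have skvu : sk v :&: sk u = set0 by rewrite setIC.
  by have := md_uv (maximally_distant_disjoint skuv)
    (maximally_distant_disjoint skvu).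
Qed.

Lemma IG_strong_resolving_set_card (W : {set V}) :
  strong_resolving_set e W -> (#|{: V}| - 2 ^ m <= #|W|)%N.
Proof.
move=> resW; pose A := [set sk u | u in ~: W].
have outW := skeletons_outside_strong_resolving_set resW.
have inj_sk : {in ~: W &, injective (fun u : V => sk u)}.
  move=> u v; rewrite !inE => uW vW skuv; apply/eqP; apply: contraT => uv.
  by case: (outW u v uW vW uv); rewrite skuv eqxx.
have intA : {in A &, forall S S', S :&: S' != set0}.
  move=> _ _ /imsetP[u uW ->] /imsetP[v vW ->]; move: uW vW; rewrite !inE.
  have [-> | uv] := eqVneq u v; first by rewrite setIid skeleton_neq0.
  by move=> uW vW; case: (outW u v uW vW uv).
have := intersecting_family_card intA; rewrite card_in_imset // card_ord expnS.
by rewrite -(cardsC W) leq_subLR addnC leq_add2r mulnC leq_pmul2l.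
Qed.

Definition indicators0 : {set V} :=
  [set u : V | (ord0 \in sk u) && (val u == indicator F (sk u))].

Lemma card_indicators0 : #|indicators0| = 2 ^ m.
Proof.
have inj_sk : {in indicators0 &, injective (fun u : V => sk u)}.
  move=> u v; rewrite !inE => /andP[_ /eqP u1] /andP[_ /eqP v1] skuv.
  by apply: val_inj; rewrite u1 v1 skuv.
have im_sk : [set sk u | u in indicators0] = [set S : {set 'I_m.+1} | ord0 \in S].
  apply/setP => S; rewrite inE; apply/imsetP/idP => [[u + ->] | S0].
    by rewrite inE => /andP[].
  have S_neq0 : S != set0 by apply/set0Pn; exists ord0.
  exists (nz_indicator F S_neq0); rewrite ?skeleton_nz_indicator //.
  by rewrite inE skeleton_nz_indicator S0 eqxx.
have := card_sets_containing (ord0 : 'I_m.+1).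
rewrite -im_sk card_in_imset // card_ord expnS mulnC => /eqP.
by rewrite eqn_pmul2l // => /eqP.
Qed.

Lemma indicators0_resolved_by_unit (u v : V) i :
  u \in indicators0 -> v \in indicators0 -> i \in sk v -> i \notin sk u ->
  exists2 w, w \notin indicators0 & strongly_resolves e w u v.
Proof.
move=> uI vI iv iu.
have [u0 v0] : ord0 \in sk u /\ ord0 \in sk v.
  by move: uI vI; rewrite !in_set => /andP[-> _] /andP[-> _].
have i_neq0 : [set i] != set0 by apply/set0Pn; exists i; rewrite inE.
set w := nz_indicator F i_neq0.
have skw : sk w = [set i] by apply: skeleton_nz_indicator.
have wI : w \notin indicators0.
  by rewrite inE skw inE; apply: contra iu => /andP[/eqP <- _].
have [uw vw] : u != w /\ v != w.
  by split; apply: contraNneq wI => <-.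
have uv : u != v by apply: contraNneq iu => ->.
exists w => //; left; exists [:: v; w].
split; last by rewrite !inE eqxx orbT.
apply: shortest_walk_path2 => //; rewrite /IG_adj ?uw ?uv ?vw /=.
- rewrite negbK skw; apply/eqP/setP => j; rewrite in_setI in_set1 in_set0.
  by case: (eqVneq j i) => [->|]; rewrite ?andbF ?(negbTE iu).
- by apply/set0Pn; exists ord0; rewrite in_setI u0 v0.
- by apply/set0Pn; exists i; rewrite skw in_setI in_set1 iv eqxx.
Qed.

Lemma strong_resolving_set_setC_indicators0 :
  strong_resolving_set e (~: indicators0).
Proof.
move=> u v uv.
have [uW | uI] := boolP (u \in ~: indicators0).
  have [p sp] := IG_shortest_walk_exists v u.
  by exists u => //; apply: strongly_resolvesC; apply: strongly_resolves_last sp.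
have [vW | vI] := boolP (v \in ~: indicators0).
  have [p sp] := IG_shortest_walk_exists u v.
  by exists v => //; apply: strongly_resolves_last sp.
move: uI vI; rewrite !in_setC !negbK => uI vI.
have skuv : sk u != sk v.
  apply: contraNneq uv => skuv; apply/eqP/val_inj.
  by move: uI vI; rewrite !in_set => /andP[_ /eqP ->] /andP[_ /eqP ->]; rewrite skuv.
have [/subsetPn[i iv iu] | sub_vu] := boolP (~~ (sk v \subset sk u)).
  have [w wI res] := indicators0_resolved_by_unit uI vI iv iu.
  by exists w; rewrite ?in_setC.
have /subsetPn[i iu iv] : ~~ (sk u \subset sk v).
  by apply: contra skuv => sub_uv; rewrite eqEsubset sub_uv negbK in sub_vu *.
have [w wI res] := indicators0_resolved_by_unit vI uI iu iv.
by exists w; [rewrite in_setC | apply: strongly_resolvesC].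
Qed.

End FiniteField.

Theorem theorem4p16 (F : finFieldType) (n : nat) :
  (3 <= n)%N ->
  is_sdimM (@IG_adj F n) (#|{: nzvec F n}| - 2 ^ (n - 1))%N.
Proof.
(* The argument only needs n >= 1. *)
case: n => [// | m] _; rewrite subSS subn0.
split; last by move=> W; apply: IG_strong_resolving_set_card.
exists (~: indicators0 F m); split; first exact: strong_resolving_set_setC_indicators0.
by have := cardsC (indicators0 F m); rewrite card_indicators0 => <-; rewrite addKn.
Qed.
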